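(* Let $\mathcal{V}$ be a non-trivial quantale, $\mathsf{F}\colon\mathbf{Set}\to\mathbf{Set}$ a functor, $\lambda$ a $\kappa$-ary $\mathcal{V}$-valued monotone predicate lifting for $\mathsf{F}$, and $(X,a)$ a $\mathcal{V}$-category. Then $\bigwedge_{g\colon\kappa\nrightarrow X}\lambda(a\cdot g)\multimap\lambda(g)=\bigwedge_{r\colon(\kappa,1_\kappa)\nrightarrow(X,a)\text{ distributor}}\lambda(r)\multimap\lambda(r)$.
   Context: A quantale $(\mathcal{V},\otimes,k)$ is a complete lattice with commutative monoid structure, each $u\otimes-$ preserving joins, $\hom(u,-)$ its right adjoint; non-trivial: $\bot\ne\top$. A $\mathcal{V}$-category $(X,a)$ has $k\le a(x,x)$, $a(x,y)\otimes a(y,z)\le a(x,z)$. $\mathcal{V}$-relations $r\colon X\nrightarrow Y$ are maps $X\times Y\to\mathcal{V}$, composed by $(s\cdot r)(x,z)=\bigvee_y r(x,y)\otimes s(y,z)$ and ordered pointwise; $1_\kappa$ is $k$ on the diagonal and $\bot$ elsewhere; $(r\multimap s)(z,y)=\bigwedge_x\hom(s(x,z),r(x,y))$ for $r\colon X\nrightarrow Y$, $s\colon X\nrightarrow Z$. A distributor $r\colon(\kappa,1_\kappa)\nrightarrow(X,a)$ is a $\mathcal{V}$-relation $r\colon\kappa\nrightarrow X$ with $a\cdot r\le r$. A $\kappa$-ary $\mathcal{V}$-valued predicate lifting is a natural transformation $\lambda\colon\mathbf{Set}(-,\mathcal{V}^\kappa)\to\mathbf{Set}(\mathsf{F}-,\mathcal{V})$,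 viewed (identifying $f\colon X\to\mathcal{V}^\kappa$ with the relation $(i,x)\mapsto f(x)(i)$ and maps $\mathsf{F}X\to\mathcal{V}$ with relations $1\nrightarrow\mathsf{F}X$) as mapping relations $\kappa\nrightarrow X$ to relations $1\nrightarrow\mathsf{F}X$; monotone if these maps are monotone for the pointwise order. *)

Record quantale := Quantale {
  qcar :> Type;
  qle : qcar -> qcar -> Prop;
  qsup : (qcar -> Prop) -> qcar;
  qtensor : qcar -> qcar -> qcar;
  qk : qcar;
  qle_refl : forall u, qle u u;
  qle_trans : forall u v w, qle u v -> qle v w -> qle u w;
  qle_antisym : forall u v, qle u v -> qle v u -> u = v;
  qsup_ub : forall (S : qcar -> Prop) u, S u -> qle u (qsup S);
  qsup_least : forall (S : qcar -> Prop) v,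
      (forall u, S u -> qle u v) -> qle (qsup S) v;
  qtensorA : forall u v w, qtensor u (qtensor v w) = qtensor (qtensor u v) w;
  qtensorC : forall u v, qtensor u v = qtensor v u;
  qtensor1 : forall u, qtensor qk u = u;
  qtensor_sup : forall u (S : qcar -> Prop),
      qtensor u (qsup S) = qsup (fun w => exists s, S s /\ w = qtensor u s)
}.

Arguments qle {q}.
Arguments qsup {q}.
Arguments qtensor {q}.
Arguments qk {q}.

Definition qinf {V : quantale} (S : V -> Prop) : V :=
  qsup (fun w => forall s, S s -> qle w s).
Definition qbot {V : quantale} : V := qsup (fun _ => False).
Definition qtop {V : quantale} : V := qsup (fun _ => True).

(** hom(u,-), the right adjoint of u (x) -. *)
Definition qhom {V : quantale} (u v : V) : V :=
  qsup (fun w => qle (qtensor u w) v).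

Definition nontrivial (V : quantale) : Prop := @qbot V <> @qtop V.

Record functor := Functor {
  fobj :> Type -> Type;
  fmap : forall X Y : Type, (X -> Y) -> fobj X -> fobj Y;
  fmap_id : forall (X : Type) (t : fobj X), fmap X X (fun x => x) t = t;
  fmap_comp : forall (X Y Z : Type) (f : X -> Y) (g : Y -> Z) (t : fobj X),
      fmap X Z (fun x => g (f x)) t = fmap Y Z g (fmap X Y f t)
}.

Definition vrel (V : quantale) (X Y : Type) := X -> Y -> V.

Definition vcomp {V : quantale} {X Y Z : Type}
  (s : vrel V Y Z) (r : vrel V X Y) : vrel V X Z :=
  fun x z => qsup (fun w => exists y, w = qtensor (r x y) (s y z)).

Definition vrel_le {V : quantale} {X Y : Type} (r s : vrel V X Y) : Prop :=
  forall x y, qle (r x y) (s x y).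

Definition vlimp {V : quantale} {X Y Z : Type}
  (r : vrel V X Y) (s : vrel V X Z) : vrel V Z Y :=
  fun z y => qinf (fun w => exists x, w = qhom (s x z) (r x y)).

Definition is_vcat {V : quantale} {X : Type} (a : vrel V X X) : Prop :=
  (forall x, qle qk (a x x)) /\
  (forall x y z, qle (qtensor (a x y) (a y z)) (a x z)).

(** Distributors r : (kappa, 1_kappa) -/-> (X, a): relations with a . r <= r. *)
Definition is_distributor {V : quantale} {kappa X : Type}
  (a : vrel V X X) (r : vrel V kappa X) : Prop :=
  vrel_le (vcomp a r) r.

(** kappa-ary V-valued predicate liftings for F, in relational form:
    lambda_X maps relations kappa -/-> X (i.e. maps X -> V^kappa, via
    (i,x) |-> f(x)(i)) to maps F X -> V (relations 1 -/-> F X). *)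
Definition pred_lifting (V : quantale) (F : functor) (kappa : Type) :=
  forall X : Type, vrel V kappa X -> fobj F X -> V.

Definition is_natural {V : quantale} {F : functor} {kappa : Type}
  (lam : pred_lifting V F kappa) : Prop :=
  forall (X Y : Type) (h : X -> Y) (f : vrel V kappa Y) (t : fobj F X),
    lam X (fun i x => f i (h x)) t = lam Y f (fmap F X Y h t).

Definition is_monotone {V : quantale} {F : functor} {kappa : Type}
  (lam : pred_lifting V F kappa) : Prop :=
  forall (X : Type) (r s : vrel V kappa X),
    vrel_le r s -> forall t, qle (lam X r t) (lam X s t).

Definition as_rel1 {V : quantale} {Y : Type} (f : Y -> V) : vrel V unit Y :=
  fun _ y => f y.

(** For every relation [g], the composite [a . g] is a distributor (by
    transitivity of [a]) lying above [g] (by reflexivity of [a]), and a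
    distributor [r] satisfies [a . r = r].  Hence every term
    [lam r -o lam r] of the right-hand meet is the term [lam (a . r) -o lam r]
    of the left-hand one, while each left-hand term
    [lam (a . g) -o lam g] dominates the distributor term for [r = a . g],
    because [hom] is antitone in its first argument and [lam g <= lam (a . g)]. *)


Section QuantaleFacts.
Variable V : quantale.

Lemma qinf_lb (S : V -> Prop) s : S s -> qle (qinf S) s.
Proof. intros Hs. apply qsup_least. intros u Hu. exact (Hu s Hs). Qed.

Lemma qinf_glb (S : V -> Prop) v : (forall s, S s -> qle v s) -> qle v (qinf S).
Proof. intros H. apply qsup_ub. exact H. Qed.

Lemma qsup_pair_le (u v : V) : qle u v -> qsup (fun w => w = u \/ w = v) = v.
Proof.
  intros Huv. apply qle_antisym.
  - apply qsup_least. intros w [-> | ->]; [exact Huv | apply qle_refl].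
  - apply qsup_ub. now right.
Qed.

Lemma qtensor_monor (t u v : V) : qle u v -> qle (qtensor t u) (qtensor t v).
Proof.
  intros Huv. rewrite <- (qsup_pair_le u v Huv), qtensor_sup.
  apply qsup_ub. exists u. split; [now left | reflexivity].
Qed.

Lemma qhom_antil (u u' v : V) : qle u' u -> qle (qhom u v) (qhom u' v).
Proof.
  intros Hu. apply qsup_least. intros w Hw. apply qsup_ub.
  apply (qle_trans _ _ (qtensor u w)); [|exact Hw].
  rewrite (qtensorC V u' w), (qtensorC V u w). now apply qtensor_monor.
Qed.

Lemma qinf_unit_const (h : V) : qinf (fun w => exists _ : unit, w = h) = h.
Proof.
  apply qle_antisym.
  - apply qinf_lb. now exists tt.
  - apply qinf_glb. intros s [_ ->]. apply qle_refl.
Qed.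

Lemma vlimp_as_rel1 {Y : Type} (f g : Y -> V) z y :
  vlimp (as_rel1 f) (as_rel1 g) z y = qhom (g z) (f y).
Proof. exact (qinf_unit_const (qhom (g z) (f y))). Qed.

End QuantaleFacts.

Section Distributors.
Variables (V : quantale) (kappa X : Type) (a : vrel V X X).

Lemma vrel_le_vcomp (a_refl : forall x, qle qk (a x x)) (g : vrel V kappa X) :
  vrel_le g (vcomp a g).
Proof.
  intros i x. apply (qle_trans _ _ (qtensor (g i x) qk)).
  - rewrite qtensorC, qtensor1. apply qle_refl.
  - apply (qle_trans _ _ (qtensor (g i x) (a x x))).
    + now apply qtensor_monor.
    + apply qsup_ub. now exists x.
Qed.

Lemma vcomp_is_distributor
  (a_trans : forall x y z, qle (qtensor (a x y) (a y z)) (a x z))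
  (g : vrel V kappa X) : is_distributor a (vcomp a g).
Proof.
  intros i x. apply qsup_least. intros w [y ->].
  unfold vcomp at 1. rewrite qtensorC, qtensor_sup.
  apply qsup_least. intros w [s [[x0 ->] ->]].
  apply (qle_trans _ _ (qtensor (g i x0) (a x0 x))).
  - rewrite (qtensorC V (a y x)), <- qtensorA. now apply qtensor_monor.
  - apply qsup_ub. now exists x0.
Qed.

Lemma lifting_vcomp_distributor {F : functor} (lam : pred_lifting V F kappa)
  (lam_mono : is_monotone lam) (a_refl : forall x, qle qk (a x x))
  (r : vrel V kappa X) (t : fobj F X) :
  is_distributor a r -> lam X (vcomp a r) t = lam X r t.
Proof.
  intros Hr. apply qle_antisym; apply lam_mono; [exact Hr | now apply vrel_le_vcomp].
Qed.

End Distributors.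

Theorem lemma2 (V : quantale) (F : functor) (kappa : Type)
  (lam : pred_lifting V F kappa)
  (HV : nontrivial V) (Hnat : is_natural lam) (Hmono : is_monotone lam)
  (X : Type) (a : vrel V X X) (Ha : is_vcat a) :
  forall z y : fobj F X,
    qinf (fun w => exists g : vrel V kappa X,
            w = vlimp (as_rel1 (lam X (vcomp a g))) (as_rel1 (lam X g)) z y)
    =
    qinf (fun w => exists r : vrel V kappa X, is_distributor a r /\
            w = vlimp (as_rel1 (lam X r)) (as_rel1 (lam X r)) z y).
Proof.
  intros z y. destruct Ha as [a_refl a_trans].
  apply qle_antisym.
  - apply qinf_glb. intros s [r [Hr ->]].
    apply qinf_lb. exists r. rewrite !vlimp_as_rel1.
    now rewrite (lifting_vcomp_distributor _ _ _ _ lam Hmono a_refl r y Hr).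
  - apply qinf_glb. intros s [g ->]. rewrite vlimp_as_rel1.
    apply (qle_trans _ _ (qhom (lam X (vcomp a g) z) (lam X (vcomp a g) y))).
    + apply qinf_lb. exists (vcomp a g).
      split; [now apply vcomp_is_distributor | now rewrite vlimp_as_rel1].
    + apply qhom_antil, Hmono, vrel_le_vcomp, a_refl.
Qed.
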